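(* Let $\ell>1$, $c>0$, $\alpha_{acc}>0$, $0<R_{Sch}<R_{ID}$, and $A(t)=\frac{c}{\alpha_{acc}}\Big(\frac{t^{1-\ell}}{1-\ell}-\frac{1}{1-\ell}\Big)$ for $t\ge1$. Then there is $\varepsilon>0$ such that the function $r=r(t)$ given implicitly by $$R_{ID}-r-R_{Sch}\ln\Big(1-\frac{R_{ID}-r}{R_{ID}-R_{Sch}}\Big)=A(t)$$ (with $r(1)=R_{ID}$, i.e. $R_{ID}-r(t)\in[0,R_{ID}-R_{Sch})$) is well defined for all $t\in[1,\infty)$ and satisfies $r(t)\ge R_{Sch}+\varepsilon$ for all $t>1$.
   Context: This $r(t)$ describes the radial null geodesic $\frac{dr}{dt}=-\frac{c}{\alpha_{acc}}t^{-\ell}\big(1-\frac{R_{Sch}}{r}\big)$ starting at $R_{ID}$. *)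

From Stdlib Require Import Reals.
Open Scope R_scope.

Definition A_fun (l c alpha_acc t : R) : R :=
  c / alpha_acc * (Rpower t (1 - l) / (1 - l) - 1 / (1 - l)).

Definition implicit_lhs (R_Sch R_ID r : R) : R :=
  R_ID - r - R_Sch * ln (1 - (R_ID - r) / (R_ID - R_Sch)).

Definition is_r_at (l c alpha_acc R_Sch R_ID t r : R) : Prop :=
  0 <= R_ID - r < R_ID - R_Sch /\
  implicit_lhs R_Sch R_ID r = A_fun l c alpha_acc t.

(** On (R_Sch, R_ID] the left-hand side F(r) is strictly decreasing, vanishes
    at r = R_ID and blows up like -R_Sch ln(r - R_Sch) as r -> R_Sch.  Since
    A(t) takes its values in [0, K) with K = c / (alpha_acc (l - 1)), the
    intermediate value theorem and monotonicity give exactly one root r(t),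
    and F(r) >= K as soon as r <= R_Sch + (R_ID - R_Sch) exp(-K / R_Sch), so
    every root lies beyond that point. *)

From Stdlib Require Import Reals Lra Ranalysis5.
From Coquelicot Require Import Coquelicot.
Open Scope R_scope.

Lemma A_fun_bounds (l c a t : R) : 1 < l -> 0 < c -> 0 < a -> 1 <= t ->
  0 <= A_fun l c a t < c / (a * (l - 1)).
Proof.
  intros hl hc ha ht.
  set (p := Rpower t (1 - l)).
  assert (hp0 : 0 < p) by apply exp_pos.
  assert (hp1 : p <= 1).
  { rewrite <- (Rpower_O t) by lra. apply Rle_Rpower; lra. }
  assert (hca : 0 < c / a) by (apply Rdiv_lt_0_compat; lra).
  unfold A_fun; fold p.
  replace (c / a * (p / (1 - l) - 1 / (1 - l))) with (c / a * (1 - p) / (l - 1))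
    by (field; lra).
  replace (c / (a * (l - 1))) with (c / a * 1 / (l - 1)) by (field; lra).
  split.
  - apply Rdiv_le_0_compat; nra.
  - apply Rmult_lt_compat_r; [apply Rinv_0_lt_compat; lra | nra].
Qed.

Section ImplicitLhs.

Variables R_Sch R_ID : R.
Hypothesis hS : 0 < R_Sch.
Hypothesis hSI : R_Sch < R_ID.

Let F := implicit_lhs R_Sch R_ID.

Lemma implicit_lhs_log_form (r : R) :
  F r = R_ID - r - R_Sch * ln ((r - R_Sch) / (R_ID - R_Sch)).
Proof. unfold F, implicit_lhs. do 3 f_equal. field. lra. Qed.

Lemma implicit_lhs_R_ID : F R_ID = 0.
Proof.
  rewrite implicit_lhs_log_form, Rdiv_diag, ln_1; [ring | apply Rgt_not_eq; lra].
Qed.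

Lemma implicit_lhs_decreasing (x y : R) :
  R_Sch < x -> x < y -> F y < F x.
Proof.
  intros hx hxy. rewrite !implicit_lhs_log_form.
  assert (ln ((x - R_Sch) / (R_ID - R_Sch)) < ln ((y - R_Sch) / (R_ID - R_Sch))).
  { apply ln_increasing; [apply Rdiv_lt_0_compat; lra |].
    apply Rmult_lt_compat_r; [apply Rinv_0_lt_compat |]; lra. }
  nra.
Qed.

Lemma implicit_lhs_continuous (r : R) : R_Sch < r -> continuity_pt F r.
Proof.
  intros hr. apply continuity_pt_filterlim.
  apply (ex_derive_continuous (K := R_AbsRing) (V := R_NormedModule)).
  unfold F, implicit_lhs. auto_derive.
  match goal with |- 0 < ?e =>
    replace e with ((r - R_Sch) / (R_ID - R_Sch)) by (field; lra) end.
  apply Rdiv_lt_0_compat; lra.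
Qed.

Lemma implicit_lhs_ge_near_R_Sch (K r : R) :
  R_Sch < r <= R_Sch + (R_ID - R_Sch) * exp (- K / R_Sch) -> r <= R_ID ->
  K <= F r.
Proof.
  intros [hr1 hr2] hr3. rewrite implicit_lhs_log_form.
  assert (hlog : ln ((r - R_Sch) / (R_ID - R_Sch)) <= - K / R_Sch).
  { rewrite <- (ln_exp (- K / R_Sch)).
    apply ln_le; [apply Rdiv_lt_0_compat; lra |].
    apply Rle_div_l; lra. }
  replace K with (- R_Sch * (- K / R_Sch)) at 1 by (field; lra).
  nra.
Qed.

Lemma implicit_lhs_root_exists (a y : R) :
  R_Sch < a -> a <= R_ID -> 0 <= y <= F a ->
  exists r, a <= r <= R_ID /\ F r = y.
Proof.
  intros ha haI hy. destruct (Req_dec a R_ID) as [-> | haI'].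
  { exists R_ID. rewrite implicit_lhs_R_ID in hy |- *. split; lra. }
  destruct (f_interv_is_interv (fun r => - F r) a R_ID (- y)) as [r [hr hFr]].
  - lra.
  - rewrite implicit_lhs_R_ID. lra.
  - intros x hx. apply continuity_pt_opp, implicit_lhs_continuous. lra.
  - exists r. split; [exact hr | lra].
Qed.

Lemma implicit_lhs_inj (x y : R) : R_Sch < x -> R_Sch < y -> F x = F y -> x = y.
Proof.
  intros hx hy hF. destruct (Rtotal_order x y) as [o | [o | o]]; [| exact o |].
  - pose proof (implicit_lhs_decreasing x y hx o). lra.
  - pose proof (implicit_lhs_decreasing y x hy o). lra.
Qed.

Lemma R_Sch_gap_bounds (K : R) :
  0 < K -> 0 < (R_ID - R_Sch) * exp (- K / R_Sch) < R_ID - R_Sch.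
Proof.
  intros hK.
  assert (exp (- K / R_Sch) < 1).
  { assert (0 < K / R_Sch) by (apply Rdiv_lt_0_compat; lra).
    rewrite <- exp_0, Rdiv_opp_l. apply exp_increasing. lra. }
  pose proof (exp_pos (- K / R_Sch)). split; nra.
Qed.

Lemma implicit_lhs_lt_far_from_R_Sch (K r : R) :
  R_Sch < r <= R_ID -> F r < K ->
  R_Sch + (R_ID - R_Sch) * exp (- K / R_Sch) < r.
Proof.
  intros hr hFr. apply Rnot_le_lt. intros hle.
  assert (K <= F r) by (apply implicit_lhs_ge_near_R_Sch; lra).
  lra.
Qed.

End ImplicitLhs.

Theorem lemma2p1 (l c alpha_acc R_Sch R_ID : R)
  (hl : 1 < l) (hc : 0 < c) (ha : 0 < alpha_acc)
  (hS : 0 < R_Sch) (hSI : R_Sch < R_ID) :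
  exists eps : R, 0 < eps /\
    (forall t : R, 1 <= t ->
       exists! r : R, is_r_at l c alpha_acc R_Sch R_ID t r) /\
    (forall t r : R, 1 < t -> is_r_at l c alpha_acc R_Sch R_ID t r ->
       R_Sch + eps <= r).
Proof.
  set (K := c / (alpha_acc * (l - 1))).
  assert (hK : 0 < K) by (apply Rdiv_lt_0_compat; nra).
  destruct (R_Sch_gap_bounds R_Sch R_ID hS hSI K hK) as [heps hepsD].
  set (eps := (R_ID - R_Sch) * exp (- K / R_Sch)) in *.
  assert (root_beyond : forall t r, 1 <= t -> is_r_at l c alpha_acc R_Sch R_ID t r ->
            R_Sch + eps < r).
  { intros t r ht [hr hFr]. destruct (A_fun_bounds l c alpha_acc t) as [_ hA]; auto.
    fold K in hA. apply implicit_lhs_lt_far_from_R_Sch; [exact hS | exact hSI | lra | lra]. }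
  exists eps. split; [exact heps | split].
  - intros t ht. destruct (A_fun_bounds l c alpha_acc t) as [hA0 hA]; auto.
    fold K in hA.
    assert (K <= implicit_lhs R_Sch R_ID (R_Sch + eps))
      by (apply implicit_lhs_ge_near_R_Sch; fold eps; lra).
    destruct (implicit_lhs_root_exists R_Sch R_ID hSI (R_Sch + eps)
                (A_fun l c alpha_acc t)) as [r [hr hFr]]; [lra | lra | lra |].
    exists r. split; [split; [lra | exact hFr] |].
    intros r' [hr' hFr']. apply (implicit_lhs_inj R_Sch R_ID hS hSI); lra.
  - intros t r ht hr. apply Rlt_le, (root_beyond t r); [lra | exact hr].
Qed.
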